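(* Let $G=(V,E,w)$ be a weighted graph with $n=|V|$ vertices. Let $\mathrm{A}(G)$ be the maximum of \[\tfrac14\,\mathbb{E}_{(\mathbf{u},\mathbf{v})\sim E}\big[1-\langle f_X(\mathbf{u}),f_X(\mathbf{v})\rangle-\langle f_Y(\mathbf{u}),f_Y(\mathbf{v})\rangle-\langle f_Z(\mathbf{u}),f_Z(\mathbf{v})\rangle\big]\] over all $f_X,f_Y,f_Z:V\to S^{3n-1}$ such that $\langle f_P(v),f_Q(v)\rangle=0$ for every $v\in V$ and all distinct $P,Q\in\{X,Y,Z\}$. Then \[\mathrm{A}(G)=\max_{f:V\to S^{n-1}}\mathbb{E}_{(\mathbf{u},\mathbf{v})\sim E}\big[\tfrac14-\tfrac34\langle f(\mathbf{u}),f(\mathbf{v})\rangle\big].\]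
   Context: A weighted graph $G=(V,E,w)$ is a finite undirected graph with nonnegative edge weights summing to $1$; $(\mathbf{u},\mathbf{v})\sim E$ is a random edge drawn according to the weights. $S^{m-1}$ is the unit sphere of $\mathbb{R}^m$. *)

From HB Require Import structures.
From mathcomp Require Import all_boot all_order all_algebra.
From mathcomp Require Import reals.
Set Implicit Arguments. Unset Strict Implicit. Unset Printing Implicit Defensive.
Import Order.TTheory GRing.Theory Num.Theory.
Local Open Scope ring_scope.

Definition dotp (R : realType) (m : nat) (x y : 'rV[R]_m) : R :=
  \sum_(i < m) x 0 i * y 0 i.

Definition on_sphere (R : realType) (m : nat) (x : 'rV[R]_m) : Prop :=
  dotp x x = 1.

(* A weighted graph on the finite vertex type V: undirected (symmetric
   weights), no loops, nonnegative weights on unordered edges summing to 1.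
   The weight of the unordered edge {u,v} is w u v = w v u; an absent edge
   has weight 0. Each unordered edge is counted twice in the double sum. *)
Definition weighted_graph (R : realType) (V : finType) (w : V -> V -> R) : Prop :=
  [/\ forall u v, 0 <= w u v,
      forall u v, w u v = w v u,
      forall u, w u u = 0
    & (\sum_(u : V) \sum_(v : V) w u v) / 2 = 1].

(* E_{(u,v) ~ E}[F u v]: a random edge drawn by weight, with uniformly random
   orientation of its endpoints. *)
Definition edge_expect (R : realType) (V : finType) (w : V -> V -> R)
  (F : V -> V -> R) : R :=
  (\sum_(u : V) \sum_(v : V) w u v * F u v) / 2.

Definition is_max (R : realType) (S : R -> Prop) (a : R) : Prop :=
  S a /\ forall b, S b -> b <= a.

Definition A_values (R : realType) (V : finType) (w : V -> V -> R) (a : R) : Prop :=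
  exists fX fY fZ : V -> 'rV[R]_(3 * #|V|),
    (forall v, [/\ on_sphere (fX v), on_sphere (fY v) & on_sphere (fZ v)]) /\
    (forall v, [/\ dotp (fX v) (fY v) = 0, dotp (fX v) (fZ v) = 0
                 & dotp (fY v) (fZ v) = 0]) /\
    a = 4^-1 * edge_expect w (fun u v =>
          1 - dotp (fX u) (fX v) - dotp (fY u) (fY v) - dotp (fZ u) (fZ v)).

Definition B_values (R : realType) (V : finType) (w : V -> V -> R) (b : R) : Prop :=
  exists f : V -> 'rV[R]_(#|V|),
    (forall v, on_sphere (f v)) /\
    b = edge_expect w (fun u v => 4^-1 - 3 / 4 * dotp (f u) (f v)).

From HB Require Import structures.
From mathcomp Require Import all_boot all_order all_algebra.
From mathcomp Require Import reals.
From mathcomp Require Import boolp classical_sets functions topology normedtype derive.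
From mathcomp Require Import ring lra.
Set Implicit Arguments. Unset Strict Implicit. Unset Printing Implicit Defensive.
Import Order.TTheory GRing.Theory Num.Theory.
Import numFieldTopology.Exports numFieldNormedType.Exports.
Local Open Scope ring_scope.

(** Averaging the three Gram matrices of an admissible triple (f_X, f_Y, f_Z) gives
    the Gram matrix of the unit vectors (f_X ++ f_Y ++ f_Z)/sqrt 3 and turns objective
    A into objective B; conversely, f placed in three mutually orthogonal blocks is an
    admissible triple with the same value. Gram matrices of n vectors are realised in
    R^n: in dimension m+1 > n some nonzero u is orthogonal to all the vectors, and a
    Householder reflection taking u^⊥ into a coordinate hyperplane drops a dimension.
    So both problems have the same values, and B attains its maximum on the compact
    product of spheres. *)

Section InnerProduct.
Variable R : realType.

Lemma dotpC m (x y : 'rV[R]_m) : dotp x y = dotp y x.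
Proof. by apply: eq_bigr => i _; rewrite mulrC. Qed.

Lemma dotpDl m (x y z : 'rV[R]_m) : dotp (x + y) z = dotp x z + dotp y z.
Proof. by rewrite /dotp -big_split; apply: eq_bigr => i _; rewrite mxE mulrDl. Qed.

Lemma dotpDr m (x y z : 'rV[R]_m) : dotp z (x + y) = dotp z x + dotp z y.
Proof. by rewrite dotpC dotpDl !(dotpC z). Qed.

Lemma dotpZl m a (x y : 'rV[R]_m) : dotp (a *: x) y = a * dotp x y.
Proof. by rewrite /dotp mulr_sumr; apply: eq_bigr => i _; rewrite mxE mulrA. Qed.

Lemma dotpZr m a (x y : 'rV[R]_m) : dotp y (a *: x) = a * dotp y x.
Proof. by rewrite dotpC dotpZl dotpC. Qed.

Lemma dotp0l m (x : 'rV[R]_m) : dotp 0 x = 0.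
Proof. by rewrite /dotp big1 // => i _; rewrite mxE mul0r. Qed.

Lemma dotp0r m (x : 'rV[R]_m) : dotp x 0 = 0.
Proof. by rewrite dotpC dotp0l. Qed.

Lemma dotp_delta m (x : 'rV[R]_m) j : dotp x (delta_mx 0 j) = x 0 j.
Proof.
rewrite /dotp (bigD1 j) //= big1 => [|k /negbTE kj].
  by rewrite mxE !eqxx mulr1 addr0.
by rewrite mxE kj mulr0.
Qed.

Lemma dotp_row_mx m1 m2 (a c : 'rV[R]_m1) (b d : 'rV[R]_m2) :
  dotp (row_mx a b) (row_mx c d) = dotp a c + dotp b d.
Proof.
rewrite /dotp big_split_ord /=; congr (_ + _); apply: eq_bigr => i _.
  by rewrite !row_mxEl.
by rewrite !row_mxEr.
Qed.

Lemma dotp_castmx m m' (e : m = m') (x y : 'rV[R]_m) :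
  dotp (castmx (erefl 1%N, e) x) (castmx (erefl 1%N, e) y) = dotp x y.
Proof. by case: m' / e; rewrite !castmx_id. Qed.

Lemma dotp_gt0 m (x : 'rV[R]_m) : x != 0 -> 0 < dotp x x.
Proof.
move=> x0; have [k xk|x_eq0] := pickP (fun k => x 0 k != 0); last first.
  by case/eqP: x0; apply/rowP => k; rewrite mxE; apply/eqP/negbFE/x_eq0.
rewrite /dotp (bigD1 k) //= ltr_pwDl ?sumr_ge0 // => [|i _].
  by rewrite -expr2 exprn_even_gt0.
by rewrite -expr2 sqr_ge0.
Qed.

End InnerProduct.

Section GramRealisation.
Variable R : realType.

Lemma dotp_reflection m (h x y : 'rV[R]_m) : dotp h h != 0 ->
  dotp (x - (2 * dotp x h / dotp h h) *: h) (y - (2 * dotp y h / dotp h h) *: h)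
  = dotp x y.
Proof.
move=> hh; rewrite -!(scaleNr _ h) !dotpDl !dotpDr !dotpZl !dotpZr (dotpC h y).
by field.
Qed.

(* The Householder reflection exchanging [u] and [-t e_m] with [t = ±|u|] maps the
   hyperplane [u^⊥] into [e_m^⊥]; the sign of [t] keeps [u + t e_m] nonzero. *)
Lemma isometry_into_last_hyperplane m (u : 'rV[R]_m.+1) : u != 0 ->
  exists H : 'rV[R]_m.+1 -> 'rV[R]_m.+1,
    (forall x y, dotp (H x) (H y) = dotp x y) /\
    (forall x, dotp x u = 0 -> H x 0 ord_max = 0).
Proof.
move=> u0; have uu := dotp_gt0 u0.
pose e : 'rV[R]_m.+1 := delta_mx 0 ord_max.
pose t := if 0 <= u 0 ord_max then Num.sqrt (dotp u u) else - Num.sqrt (dotp u u).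
have tt : t * t = dotp u u.
  by rewrite /t; case: ifP => _; rewrite ?mulrNN -expr2 sqr_sqrtr // ltW.
have tu : 0 <= t * u 0 ord_max.
  rewrite /t; case: ifP => h; first by rewrite mulr_ge0 // sqrtr_ge0.
  by rewrite mulNr -mulrN mulr_ge0 ?sqrtr_ge0 // oppr_ge0 ltW // ltNge h.
have ee : dotp e e = 1 by rewrite dotp_delta mxE !eqxx.
have ue : dotp u e = u 0 ord_max by rewrite dotp_delta.
pose h := u + t *: e.
have hh : dotp h h = 2 * (t * t + t * u 0 ord_max).
  by rewrite !dotpDl !dotpDr !dotpZl !dotpZr ee (dotpC e) ue -tt; ring.
have hh0 : t * t + t * u 0 ord_max != 0 by rewrite gt_eqF // tt ltr_wpDr.
exists (fun x => x - (2 * dotp x h / dotp h h) *: h); split.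
  by move=> x y; apply: dotp_reflection; rewrite hh mulf_neq0 ?pnatr_eq0.
move=> x xu; rewrite -[LHS]dotp_delta -(scaleNr _ h) dotpDl dotpZl.
have xh : dotp x h = t * x 0 ord_max by rewrite dotpDr xu dotpZr dotp_delta add0r.
have he : dotp h e = u 0 ord_max + t by rewrite dotpDl dotpZl ee ue mulr1.
by rewrite dotp_delta xh he hh; field.
Qed.

(* [#|I| <= m] vectors of [R^(m+1)] have a nonzero common orthogonal vector. *)
Lemma gram_shrink (I : finType) m (g : I -> 'rV[R]_m.+1) : (#|I| <= m)%N ->
  exists g' : I -> 'rV[R]_m, forall a b, dotp (g' a) (g' b) = dotp (g a) (g b).
Proof.
move=> Im; pose M : 'M[R]_(m.+1, #|I|) := \matrix_(i, j) g (enum_val j) 0 i.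
have kerM0 : kermx M != 0.
  rewrite -mxrank_eq0 mxrank_ker subn_eq0 -ltnNge ltnS.
  exact: leq_trans (rank_leq_col M) Im.
have [i ui|ker_eq0] := pickP (fun i => row i (kermx M) != 0); last first.
  case/eqP: kerM0; apply/matrixP => a b.
  by move/negbFE: (ker_eq0 a) => /eqP/rowP/(_ b); rewrite !mxE.
pose u := row i (kermx M).
have gu v : dotp (g v) u = 0.
  have /eqP uM : u *m M == 0 by rewrite -sub_kermx row_sub.
  move/(congr1 (fun A : 'M[R]_(1, #|I|) => A 0 (enum_rank v))): uM.
  rewrite !mxE => <-; apply: eq_bigr => k _.
  by rewrite !mxE enum_rankK mulrC.
have [H [Hiso Hlast]] := isometry_into_last_hyperplane ui.
exists (fun a => \row_(j < m) H (g a) 0 (widen_ord (leqnSn m) j)) => a b.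
rewrite -(Hiso (g a) (g b)) [in RHS]/dotp big_ord_recr /= (Hlast _ (gu a)).
by rewrite mul0r addr0; apply: eq_bigr => j _; rewrite !mxE.
Qed.

Lemma gram_pad (I : Type) m n (g : I -> 'rV[R]_m) : (m <= n)%N ->
  exists h : I -> 'rV[R]_n, forall a b, dotp (h a) (h b) = dotp (g a) (g b).
Proof.
move=> mn; exists (fun a => castmx (erefl 1%N, subnKC mn) (row_mx (g a) 0)).
by move=> a b; rewrite dotp_castmx dotp_row_mx dotp0l addr0.
Qed.

Lemma gram_realise (I : finType) m n (g : I -> 'rV[R]_m) : (#|I| <= n)%N ->
  exists h : I -> 'rV[R]_n, forall a b, dotp (h a) (h b) = dotp (g a) (g b).
Proof.
move=> In; elim: m g => [|m IHm] g; first exact: gram_pad.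
have [mn|nm] := leqP m.+1 n; first exact: gram_pad.
have [g' g'g] := gram_shrink g (leq_trans In (nm : (n <= m)%N)).
by have [h hg'] := IHm g'; exists h => a b; rewrite hg' g'g.
Qed.

End GramRealisation.

Lemma continuous_sum (T : topologicalType) (K : numFieldType) (I : Type)
    (r : seq I) (h : I -> T -> K) :
  (forall i, continuous (h i)) -> continuous (fun x => \sum_(i <- r) h i x).
Proof.
move=> hc; rewrite -fct_sumE; elim/big_ind: _ => // [x | f g cf cg x].
  exact: cst_continuous.
by apply: continuousD; [exact: cf | exact: cg].
Qed.

Lemma continuous_mul (T : topologicalType) (K : numFieldType) (s t : T -> K) :
  continuous s -> continuous t -> continuous (fun x => s x * t x).
Proof. by move=> cs ct x; apply: continuousM; [exact: cs | exact: ct]. Qed.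

Lemma continuous_sub (T : topologicalType) (K : numFieldType) (s t : T -> K) :
  continuous s -> continuous t -> continuous (fun x => s x - t x).
Proof. by move=> cs ct x; apply: continuousB; [exact: cs | exact: ct]. Qed.

Section SphereFamilies.
Variables (R : realType) (V : finType).
Local Notation N := #|V|.

(* A family [V -> R^N] is coded by one vector of [R^(N*N)], so that compactness
   of boxes in row vectors applies. *)
Definition unpack (x : 'rV[R]_(N * N)) (v : V) : 'rV[R]_N :=
  \row_j x 0 (mxvec_index (enum_rank v) j).

Definition pack (f : V -> 'rV[R]_N) : 'rV[R]_(N * N) :=
  mxvec (\matrix_(i, j) f (enum_val i) 0 j).

Lemma packK f : unpack (pack f) = f.
Proof.
by apply/funext => v; apply/rowP => j; rewrite !mxE mxvecE mxE enum_rankK.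
Qed.

Lemma continuous_dotp_unpack u v :
  continuous (fun x => dotp (unpack x u) (unpack x v)).
Proof.
have coord w j : continuous (fun x => unpack x w 0 j).
  suff -> : (fun x => unpack x w 0 j) = fun x => x 0 (mxvec_index (enum_rank w) j).
    exact: coord_continuous.
  by apply/funext => x; rewrite mxE.
by apply: continuous_sum => j; apply: continuous_mul; exact: coord.
Qed.

Local Open Scope classical_set_scope.

Definition sphere_families : set 'rV[R]_(N * N) :=
  \bigcap_(v in [set: V]) [set x | on_sphere (unpack x v)].

Lemma sphere_familiesP x : sphere_families x <-> forall v, on_sphere (unpack x v).
Proof. by split=> [Sx v | Sx v _]; [exact: Sx | exact: Sx]. Qed.

Lemma sphere_families_neq0 : sphere_families !=set0.
Proof.
exists (pack (fun v => delta_mx 0 (enum_rank v))); apply/sphere_familiesP => v.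
by rewrite /on_sphere packK dotp_delta mxE !eqxx.
Qed.

Lemma compact_sphere_families : compact sphere_families.
Proof.
have box : compact [set x : 'rV[R]_(N * N) | forall i, `[(-1 : R), 1] (x ord0 i)].
  by apply: (@rV_compact _ _ (fun=> `[(-1 : R), 1])) => _; exact: segment_compact.
apply: subclosed_compact box _.
  apply: closed_bigI => v _; rewrite /on_sphere.
  apply: (preimage_closed (D := [set y : R | y = 1])); last exact: closed_eq.
  by move=> x _; exact: continuous_dotp_unpack.
move=> x /sphere_familiesP Sx i; case/mxvec_indexP: i => r j.
have := Sx (enum_val r); rewrite /on_sphere /dotp (bigD1 j) //= mxE enum_valK.
set s := \sum_(_ | _) _; set a := x 0 _ => sa.
have s0 : 0 <= s by rewrite sumr_ge0 // => k _; rewrite -expr2 sqr_ge0.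
by rewrite in_itv /=; apply/andP; split; nra.
Qed.

End SphereFamilies.

Section Objectives.
Variables (R : realType) (V : finType) (w : V -> V -> R).
Local Notation N := #|V|.

Definition B_objective (f : V -> 'rV[R]_N) : R :=
  edge_expect w (fun u v => 4^-1 - 3 / 4 * dotp (f u) (f v)).

Lemma edge_expectZ c (F : V -> V -> R) :
  c * edge_expect w F = edge_expect w (fun u v => c * F u v).
Proof.
rewrite /edge_expect mulrA mulr_sumr; congr (_ / _); apply: eq_bigr => u _.
by rewrite mulr_sumr; apply: eq_bigr => v _; ring.
Qed.

Lemma B_objective_max : exists2 f0 : V -> 'rV[R]_N, forall v, on_sphere (f0 v) &
  forall f, (forall v, on_sphere (f v)) -> B_objective f <= B_objective f0.
Proof.
have cB : continuous (fun x => B_objective (unpack x)).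
  apply: continuous_mul; last exact: cst_continuous.
  apply: continuous_sum => u; apply: continuous_sum => v.
  apply: continuous_mul; first exact: cst_continuous.
  apply: continuous_sub; first exact: cst_continuous.
  by apply: continuous_mul; [exact: cst_continuous | exact: continuous_dotp_unpack].
have [x Sx xmax] := compact_EVT_max (@sphere_families_neq0 R V)
  (@compact_sphere_families R V) (continuous_subspaceT cB).
move: Sx; rewrite inE => /sphere_familiesP Sx.
exists (unpack x) => // f Sf; rewrite -[f]packK; apply: xmax.
by rewrite inE; apply/sphere_familiesP; rewrite packK.
Qed.

Lemma A_values_B_objective a : A_values w a ->
  exists2 f : V -> 'rV[R]_N, forall v, on_sphere (f v) & a = B_objective f.
Proof.
move=> [fX [fY [fZ [S [_ ->]]]]].
pose g v := (Num.sqrt 3)^-1 *: row_mx (fX v) (row_mx (fY v) (fZ v)).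
have gg u v : dotp (g u) (g v) =
    3^-1 * (dotp (fX u) (fX v) + (dotp (fY u) (fY v) + dotp (fZ u) (fZ v))).
  by rewrite dotpZl dotpZr !dotp_row_mx mulrA -invfM -expr2 sqr_sqrtr ?ler0n.
have [f fg] := gram_realise g (leqnn N).
exists f => [v|]; first by rewrite /on_sphere fg gg; case: (S v) => -> -> ->; field.
rewrite /B_objective edge_expectZ; congr edge_expect.
by apply/funext => u; apply/funext => v; rewrite fg gg; field.
Qed.

Lemma B_objective_A_values f : (forall v, on_sphere (f v)) ->
  A_values w (B_objective f).
Proof.
move=> Sf; have N3 : (N + (N + N) = 3 * N)%N by rewrite mulSn mul2n addnn.
pose blocks (x y z : 'rV[R]_N) : 'rV[R]_(3 * N) :=
  castmx (erefl 1%N, N3) (row_mx x (row_mx y z)).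
have dotp_blocks x y z x' y' z' :
    dotp (blocks x y z) (blocks x' y' z') = dotp x x' + (dotp y y' + dotp z z').
  by rewrite dotp_castmx !dotp_row_mx.
exists (fun v => blocks (f v) 0 0), (fun v => blocks 0 (f v) 0),
  (fun v => blocks 0 0 (f v)).
rewrite /on_sphere; split; [|split].
- by move=> v; rewrite !dotp_blocks !(dotp0l, dotp0r, addr0, add0r) Sf.
- by move=> v; rewrite !dotp_blocks !(dotp0l, dotp0r, addr0).
- rewrite /B_objective edge_expectZ; congr edge_expect.
  apply/funext => u; apply/funext => v.
  by rewrite !dotp_blocks !(dotp0l, dotp0r, addr0, add0r); field.
Qed.

End Objectives.

Theorem proposition7p4 (R : realType) (V : finType) (w : V -> V -> R) :
  weighted_graph w ->
  exists a : R, is_max (A_values w) a /\ is_max (B_values w) a.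
Proof.
move=> _; have [f0 Sf0 f0max] := B_objective_max w.
exists (B_objective w f0); split; split.
- exact: B_objective_A_values.
- by move=> a /A_values_B_objective [f Sf ->]; exact: f0max.
- by exists f0.
- by move=> b [f [Sf ->]]; exact: f0max.
Qed.
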